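(* Assume $X$ satisfies condition (P). For every $w\in W_c$, $$\sum_{x\in W_c,\ x\le w}\varepsilon_x\,q^{-\ell(x)/2}\,L_{x,w}=\delta_{e,w}.$$
   Context: Let $X$ be a Coxeter graph with Coxeter system $(W,S)$, length function $\ell$, Bruhat order $\le$, identity $e$; write $\varepsilon_w=(-1)^{\ell(w)}$ and $\ell(x,w)=\ell(w)-\ell(x)$. An element of $W$ is fully commutative if any two of its reduced expressions are related by a sequence of moves $ss'\leftrightarrow s's$ with $s,s'\in S$ commuting; $W_c$ denotes the set of fully commutative elements, $[x,w]_c=\{y\in W_c:x\le y\le w\}$ and $(x,w)_c=\{y\in W_c:x<y<w\}$. $\mathcal H$ is the Hecke algebra of $W$ over $\mathcal A=\mathbb Z[q^{1/2},q^{-1/2}]$ with basis $\{T_w\}_{w\in W}$ and multiplication $T_wT_s=T_{ws}$ if $\ell(ws)>\ell(w)$, $T_wT_s=qT_{ws}+(q-1)T_w$ if $\ell(ws)<\ell(w)$. $J$ is the two-sided ideal generated by the elements $\sum_{w\in\langle s,s'\rangle}T_w$ for all pairs of non-commuting $s,s'\in S$ such that $ss'$ has finite order; $TL(X)=\mathcal H/J$, $\sigma:\mathcal H\to TL(X)$ the projection, $t_w=\sigma(T_w)$. $\{t_w:w\in W_c\}$ is an $\mathcal A$-basis of $TL(X)$; for $w\in W$ the polynomials $D_{x,w}\in\mathbb Z[q]$ ($x\in W_c$) are defined by $t_w=\sum_{x\in W_c,\,x\le w}D_{x,w}t_x$, with $D_{x,w}=0$ if $x\not\le w$ (so $D_{x,w}=\delta_{x,w}$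 when $w\in W_c$). Let $\iota$ be the ring involution of $\mathcal H$ with $\iota(q^{1/2})=q^{-1/2}$, $\iota(T_w)=(T_{w^{-1}})^{-1}$; it preserves $J$ and so induces an involution of $TL(X)$. $R_{x,w}$ are the $R$-polynomials, defined by $(T_{w^{-1}})^{-1}=\varepsilon_wq^{-\ell(w)}\sum_{x\le w}\varepsilon_xR_{x,w}T_x$, and $P_{x,w}$ are the Kazhdan–Lusztig polynomials, so that $C'_w=q^{-\ell(w)/2}\sum_{x\le w}P_{x,w}T_x$ is $\iota$-invariant, $P_{w,w}=1$, $\deg P_{x,w}\le(\ell(x,w)-1)/2$ for $x<w$. For $w\in W_c$, the polynomials $a_{y,w}\in\mathbb Z[q]$ ($y\in W_c$) are defined by $\iota(t_w)=(t_{w^{-1}})^{-1}=q^{-\ell(w)}\sum_{y\in W_c,\,y\le w}a_{y,w}t_y$, $a_{y,w}=0$ if $y\not\le w$. Let $p\mapsto\overline p$ be the ring involution of $\mathbb Z[q^{1/2},q^{-1/2}]$ with $q^{1/2}\mapsto q^{-1/2}$. For $w\in W_c$, $\{L_{x,w}\}_{x\in W_c}$ is the unique family in $\mathbb Z[q^{-1/2}]$ with $L_{x,w}=0$ if $x\not\le w$, $L_{w,w}=1$, $L_{x,w}\in q^{-1/2}\mathbb Z[q^{-1/2}]$ if $x<w$, and $L_{x,w}=\sum_{y\in[x,w]_c}q^{(\ell(x)-\ell(y))/2}a_{x,y}\,\overline{L_{y,w}}$; set $c_w=\sum_{x\in W_c,\,x\le w}q^{-\ell(x)/2}L_{x,w}t_x$.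 Condition (P) on $X$: $\sigma(C'_w)=c_w$ for all $w\in W_c$ and $\sigma(C'_w)=0$ for all $w\in W\setminus W_c$. (For finite irreducible or affine $X$, this holds exactly when $X$ has no vertex adjacent to three or more vertices and $X\neq\widetilde F_4$; in particular types $A$, $B$, $F_4$, $H_3$, $H_4$, $I_2(m)$.) *)

From HB Require Import structures.
From mathcomp Require Import all_boot all_order all_algebra.
From mathcomp Require Import fraction.
From Stdlib Require Import ClassicalEpsilon.

Set Implicit Arguments.
Unset Strict Implicit.
Unset Printing Implicit Defensive.

Import GRing.Theory.
Local Open Scope ring_scope.

Definition pbool (P : Prop) : bool :=
  if excluded_middle_informative P then true else false.

(* The congruence on words generated by the Coxeter relators
   s s = 1 and (s t)^(m s t) = 1 (m s t = 0 encodes m = infinity).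
   Since every generator is an involution, the monoid presented by these
   relators is the Coxeter group <S | s^2, (st)^m>. *)
Inductive cox_eq (S : finType) (m : S -> S -> nat) : seq S -> seq S -> Prop :=
| ce_refl u : cox_eq m u u
| ce_sym u u' : cox_eq m u u' -> cox_eq m u' u
| ce_trans u u' u'' : cox_eq m u u' -> cox_eq m u' u'' -> cox_eq m u u''
| ce_rel a b s t : (0 < m s t)%N ->
    cox_eq m (a ++ flatten (nseq (m s t) [:: s; t]) ++ b) (a ++ b).

(* A Coxeter graph X (equivalently its Coxeter matrix cm on the finite vertex
   set cS) together with its Coxeter group W = cW, given by a surjection
   wprod from words onto W whose kernel is exactly the Coxeter congruence. *)
Record coxsys := CoxSys {
  cS : finType;
  cm : cS -> cS -> nat;
  cm_diag : forall s, cm s s = 1%N;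
  cm_sym : forall s t, cm s t = cm t s;
  cm_off : forall s t, s != t -> cm s t != 1%N;
  cW : eqType;
  wprod : seq cS -> cW;
  wprod_surj : forall w, exists u, wprod u = w;
  wprod_ker : forall u u', wprod u = wprod u' <-> cox_eq cm u u'
}.

Definition has_len (C : coxsys) (w : cW C) (n : nat) : bool :=
  [exists t : n.-tuple (cS C), @wprod C t == w].

Lemma has_len_ex (C : coxsys) (w : cW C) : exists n, has_len w n.
Proof.
have [u <-] := wprod_surj w.
exists (size u); apply/existsP; exists (in_tuple u); by [].
Qed.

Definition len (C : coxsys) (w : cW C) : nat := ex_minn (has_len_ex w).

Definition rword (C : coxsys) (w : cW C) : seq (cS C) :=
  match [pick t : (len w).-tuple (cS C) | @wprod C t == w] with
  | Some t => val t | None => [::] end.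

Definition wone (C : coxsys) : cW C := @wprod C [::].
Definition wmul (C : coxsys) (x y : cW C) : cW C := @wprod C (rword x ++ rword y).
Definition wmulS (C : coxsys) (x : cW C) (s : cS C) : cW C :=
  @wprod C (rcons (rword x) s).
Definition winv (C : coxsys) (x : cW C) : cW C := @wprod C (rev (rword x)).

Definition is_refl (C : coxsys) (t : cW C) : Prop :=
  exists (u : seq (cS C)) (s : cS C), t = @wprod C (u ++ s :: rev u).

Inductive bruhat (C : coxsys) (x : cW C) : cW C -> Prop :=
| br0 : bruhat x x
| brS y t : bruhat x y -> is_refl t -> (len y < len (wmul y t))%N ->
            bruhat x (wmul y t).

Inductive comm_eq (C : coxsys) : seq (cS C) -> seq (cS C) -> Prop :=
| cq_refl u : comm_eq u u
| cq_step a b s t u : cm s t = 2%N ->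
    comm_eq (a ++ [:: t; s] ++ b) u -> comm_eq (a ++ [:: s; t] ++ b) u.

Definition reduced (C : coxsys) (w : cW C) (u : seq (cS C)) : Prop :=
  @wprod C u = w /\ size u = len w.

Definition fc (C : coxsys) (w : cW C) : Prop :=
  forall u u', reduced w u -> reduced w u' -> @comm_eq C u u'.

Definition ball (C : coxsys) (n : nat) : seq (cW C) :=
  undup (flatten [seq map (fun t : k.-tuple (cS C) => @wprod C t)
                           (enum {: k.-tuple (cS C)}) | k <- iota 0 n.+1]).

(* {x : x <= w} and {x in W_c : x <= w}  (Bruhat-below elements have
   length <= l(w)) *)
Definition lower (C : coxsys) (w : cW C) : seq (cW C) :=
  [seq x <- ball C (len w) | pbool (bruhat x w)].
Definition lowerc (C : coxsys) (w : cW C) : seq (cW C) :=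
  [seq x <- ball C (len w) | pbool (fc x /\ bruhat x w)].

(* A = Z[q^(1/2), q^(-1/2)] is realised inside the fraction field of Z[v],
   v = q^(1/2). *)
Definition K := {fraction {poly int}}.
Definition v : K := tofrac ('X : {poly int}).
Definition q : K := v ^+ 2.
Definition isA (a : K) : Prop :=
  exists (p : {poly int}) (n : nat), a = tofrac p / v ^+ n.
Definition evalK (p : {poly int}) (x : K) : K :=
  \sum_(i < size p) (p`_i)%:~R * x ^+ i.

Definition sgn (C : coxsys) (w : cW C) : K := (-1) ^+ len w.

(* an element is a formal finite sum  sum (w, c) ~ sum c T_w  *)
Definition hecke (C : coxsys) := seq (cW C * K).
Definition coef (C : coxsys) (h : hecke C) (w : cW C) : K :=
  \sum_(p <- h) (if p.1 == w then p.2 else 0).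
Definition heq (C : coxsys) (h h' : hecke C) : Prop :=
  forall w, coef h w = coef h' w.
Definition hT (C : coxsys) (w : cW C) : hecke C := [:: (w, 1)].
Definition hscale (C : coxsys) (a : K) (h : hecke C) : hecke C :=
  [seq (p.1, a * p.2) | p <- h].
Definition hA (C : coxsys) (h : hecke C) : Prop := forall p, p \in h -> isA p.2.
Definition rmulS (C : coxsys) (h : hecke C) (s : cS C) : hecke C :=
  flatten [seq if (len p.1 < len (wmulS p.1 s))%N then [:: (wmulS p.1 s, p.2)]
               else [:: (wmulS p.1 s, q * p.2); (p.1, (q - 1) * p.2)] | p <- h].
Definition rmulW (C : coxsys) (h : hecke C) (w : cW C) : hecke C :=
  foldl (@rmulS C) h (rword w).
Definition hmul (C : coxsys) (h h' : hecke C) : hecke C :=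
  flatten [seq hscale p.2 (rmulW h p.1) | p <- h'].

(* iT w = iota(T_w) = (T_{w^-1})^-1 *)
Definition is_iotaT (C : coxsys) (iT : cW C -> hecke C) : Prop :=
  forall w, heq (hmul (hT (winv w)) (iT w)) (hT (wone C)) /\
            heq (hmul (iT w) (hT (winv w))) (hT (wone C)).

Definition dihedral (C : coxsys) (s t : cS C) : seq (cW C) :=
  [seq x <- ball C (cm s t) |
     pbool (exists u, all (fun r => (r == s) || (r == t)) u /\ @wprod C u = x)].
Definition Jgen (C : coxsys) (s t : cS C) : hecke C :=
  [seq (x, 1) | x <- dihedral s t].

(* two-sided ideal of H (over A) generated by the Jgen s t, for s, t
   non-commuting with st of finite order, i.e. 3 <= m s t < infinity *)
Inductive inJ (C : coxsys) : hecke C -> Prop :=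
| J0 : inJ [::]
| Jg s t : (2 < cm s t)%N -> inJ (Jgen s t)
| Jadd h1 h2 : inJ h1 -> inJ h2 -> inJ (h1 ++ h2)
| Jl x h : hA x -> inJ h -> inJ (hmul x h)
| Jr x h : hA x -> inJ h -> inJ (hmul h x)
| Jeq h h' : inJ h -> heq h h' -> inJ h'.

Definition Cp (C : coxsys) (P : cW C -> cW C -> {poly int}) (w : cW C) : hecke C :=
  [seq (x, v ^- len w * evalK (P x w) q) | x <- lower w].
Definition iotaCp (C : coxsys) (iT : cW C -> hecke C)
    (P : cW C -> cW C -> {poly int}) (w : cW C) : hecke C :=
  flatten [seq hscale (v ^+ len w * evalK (P x w) q^-1) (iT x) | x <- lower w].
Definition is_KL (C : coxsys) (iT : cW C -> hecke C)
    (P : cW C -> cW C -> {poly int}) : Prop :=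
  forall w, [/\ heq (iotaCp iT P w) (Cp P w), P w w = 1 &
    forall x, bruhat x w -> x <> w ->
      ((size (P x w)).*2 <= (len w - len x).+1)%N].

(* iota(t_w) = sigma(iota(T_w)) = q^{-l(w)} sum a_{y,w} t_y in TL(X) *)
Definition is_aTL (C : coxsys) (iT : cW C -> hecke C)
    (a : cW C -> cW C -> {poly int}) : Prop :=
  forall w, fc w ->
    (forall y, fc y -> ~ bruhat y w -> a y w = 0) /\
    inJ (iT w ++ hscale (-1) [seq (y, q ^- len w * evalK (a y w) q) | y <- lowerc w]).

(* L x w is a polynomial in u = q^{-1/2}: L_{x,w} = evalK (L x w) v^-1 *)
Definition is_L (C : coxsys) (a L : cW C -> cW C -> {poly int}) : Prop :=
  forall w, fc w -> [/\ L w w = 1,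
    forall x, fc x -> ~ bruhat x w -> L x w = 0,
    forall x, fc x -> bruhat x w -> x <> w -> (L x w)`_0 = 0 &
    forall x, fc x -> evalK (L x w) v^-1 =
      \sum_(y <- lowerc w | pbool (bruhat x y))
         v ^+ len x / v ^+ len y * evalK (a x y) q * evalK (L y w) v].

Definition cw (C : coxsys) (L : cW C -> cW C -> {poly int}) (w : cW C) : hecke C :=
  [seq (x, v ^- len x * evalK (L x w) v^-1) | x <- lowerc w].

Definition condP (C : coxsys) (P L : cW C -> cW C -> {poly int}) : Prop :=
  forall w, (fc w -> inJ (Cp P w ++ hscale (-1) (cw L w))) /\
            (~ fc w -> inJ (Cp P w)).

(* The proof goes through the sign character phi of the Hecke algebra, the
   A-linear map  sum_w c_w T_w |-> sum_w eps_w c_w  (the specialisation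
   T_s |-> -1).
   1. phi reverses the sign under right multiplication by T_s, hence is
      multiplicative; it only depends on the element of H that a formal sum
      represents.
   2. phi kills the ideal J: right multiplication by s permutes a finite
      dihedral subgroup <s,t> and flips every sign, so the value of phi on the
      generator sum_{w in <s,t>} T_w equals its own opposite.
   3. phi(iota(T_x)) = eps_x, since T_{x^-1} iota(T_x) = 1.
   4. For w <> e, v^{l(w)} phi(C'_w) is an integer polynomial in v = q^{1/2}
      whose exponents 2i are < l(w) (degree bound on P_{x,w}); applying 3 to
      the iota-invariance of C'_w writes the same element with the exponents
      2l(w) - 2i > l(w).  Hence phi(C'_w) = 0.
   5. Under condition (P), c_w - C'_w lies in J, so phi(c_w) = phi(C'_w), and
      phi(c_w) is exactly the sum of the theorem; for w = e it is L_{e,e} = 1. *)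

From mathcomp Require Import all_boot all_order all_algebra fraction.
From mathcomp Require Import ring zify.
From Stdlib Require Import ClassicalEpsilon.
Import GRing.Theory.
Local Open Scope ring_scope.

Set Implicit Arguments.
Unset Strict Implicit.

Lemma pboolP (P : Prop) : reflect P (pbool P).
Proof. by rewrite /pbool; case: excluded_middle_informative => h; constructor. Qed.

Lemma big_pick_eq (T : eqType) (V : nmodType) (r : seq T) (a : T) (f : T -> V) :
  uniq r -> a \in r -> \sum_(y <- r) (if a == y then f y else 0) = f a.
Proof.
elim: r => // b r IH /= /andP [nb ur]; rewrite in_cons big_cons.
case: eqP => [-> _|_ /= ha]; last by rewrite IH // add0r.
rewrite big_seq big1 ?addr0 // => y yr; case: eqP => // ey.
by move: nb; rewrite ey yr.
Qed.

Section Words.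
Variable C : coxsys.
Local Notation S := (cS C).
Local Notation m := (@cm C).
Implicit Types (x w : cW C) (s : S).

Lemma cox_eq_ctx u u' a b : cox_eq m u u' -> cox_eq m (a ++ u ++ b) (a ++ u' ++ b).
Proof.
elim=> [x|x y _ IH|x y z _ IH1 _ IH2|a0 b0 s t hst].
- exact: ce_refl.
- exact: ce_sym.
- exact: ce_trans IH2.
- rewrite !catA -(catA a a0) -!catA.
  have := ce_rel (a ++ a0) (b0 ++ b) hst. by rewrite -!catA.
Qed.

Lemma cox_cons (r : S) u u' : cox_eq m u u' -> cox_eq m (r :: u) (r :: u').
Proof. by move=> /(cox_eq_ctx [:: r] [::]); rewrite !cats0. Qed.

Lemma wprod_ctx (u u' a b : seq S) : wprod u = wprod u' ->
  wprod (a ++ u ++ b) = wprod (a ++ u' ++ b).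
Proof. by move=> /wprod_ker h; apply/wprod_ker; apply: cox_eq_ctx. Qed.

(* All Coxeter relators have even length, so the parity of a word is an
   invariant of the element it represents: this is what makes eps well defined. *)
Lemma cox_eq_odd u u' : cox_eq m u u' -> odd (size u) = odd (size u').
Proof.
have size_rel n (s t : S) : size (flatten (nseq n [:: s; t])) = n.*2.
  by elim: n => //= n IH; rewrite IH doubleS.
elim=> [x|x y _ IH|x y z _ IH1 _ IH2|a0 b0 s t _] //.
- by rewrite IH1 IH2.
by rewrite !size_cat size_rel addnCA oddD odd_double.
Qed.

Lemma len_spec w : exists t : (len w).-tuple S, wprod t = w.
Proof.
rewrite /len; case: ex_minnP => n /existsP [t /eqP ht] _; by exists t.
Qed.

Lemma len_le (u : seq S) : (len (wprod u) <= size u)%N.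
Proof.
rewrite /len; case: ex_minnP => n _; apply.
by apply/existsP; exists (in_tuple u).
Qed.

Lemma rwordP w : wprod (rword w) = w /\ size (rword w) = len w.
Proof.
rewrite /rword; case: pickP => [t /eqP -> | h]; first by rewrite size_tuple.
have [t ht] := len_spec w; move: (h t); by rewrite ht eqxx.
Qed.

Lemma len_wone : len (wone C) = 0%N.
Proof. by apply/eqP; rewrite -leqn0; apply: (len_le [::]). Qed.

Lemma len0_wone w : len w = 0%N -> w = wone C.
Proof.
move=> h; have [hw hs] := rwordP w; rewrite h in hs.
by rewrite -hw (size0nil hs).
Qed.

Lemma sgn_wprod (u : seq S) : sgn (wprod u) = (-1) ^+ size u.
Proof.
rewrite /sgn; have [t ht] := len_spec (wprod u).
move/wprod_ker/cox_eq_odd: ht; rewrite size_tuple => h.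
by rewrite -signr_odd h signr_odd.
Qed.

Lemma sgnE w : sgn w = (-1) ^+ size (rword w).
Proof. by rewrite (proj2 (rwordP w)). Qed.

Lemma sgn_wmulS x s : sgn (wmulS x s) = - sgn x.
Proof. by rewrite /wmulS sgn_wprod size_rcons exprS sgnE mulN1r. Qed.

Lemma sgn_winv x : sgn (winv x) = sgn x.
Proof. by rewrite /winv sgn_wprod size_rev sgnE. Qed.

Lemma sgn_wone : sgn (wone C) = 1.
Proof. by rewrite /wone sgn_wprod. Qed.

Lemma sgn_sq x : sgn x * sgn x = 1.
Proof. by rewrite /sgn -expr2 sqrr_sign. Qed.

Lemma wmulSK x s : wmulS (wmulS x s) s = x.
Proof.
rewrite /wmulS -!cats1.
have [h1 _] := rwordP (wprod (rword x ++ [:: s])).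
have := @wprod_ctx _ _ [::] [:: s] h1; rewrite /= => ->.
rewrite -catA /=.
have -> : wprod (rword x ++ [:: s; s]) = wprod (rword x ++ [::]).
  apply/wprod_ker.
  have := ce_rel (rword x) [::] (m := m) (s := s) (t := s).
  by rewrite cm_diag /=; apply.
by rewrite cats0 (proj1 (rwordP x)).
Qed.

Lemma mem_ball w n : (len w <= n)%N -> w \in ball C n.
Proof.
move=> hl; rewrite /ball mem_undup; apply/flatten_mapP.
exists (len w); first by rewrite mem_iota.
have [tw htw] := len_spec w; apply/mapP; exists tw => //; by rewrite mem_enum.
Qed.

Lemma ball_len w n : w \in ball C n -> (len w <= n)%N.
Proof.
rewrite /ball mem_undup => /flatten_mapP [k]; rewrite mem_iota add0n ltnS => hk.
case/mapP => tw _ ->; apply: leq_trans (len_le _) _; by rewrite size_tuple.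
Qed.

Lemma sum_lowerc_wone (F : cW C -> K) :
  \sum_(x <- lowerc (wone C)) F x = F (wone C).
Proof.
have pe : perm_eq (lowerc (wone C)) [:: wone C].
  apply: uniq_perm => //; first by rewrite /lowerc filter_uniq // undup_uniq.
  move=> y; rewrite /lowerc mem_filter mem_seq1; apply/andP/eqP.
    by case=> _ /ball_len; rewrite len_wone leqn0 => /eqP; exact: len0_wone.
  move=> ->; split; last by apply: mem_ball; rewrite len_wone.
  apply/pboolP; split; last exact: br0.
  move=> u u' [_ hu] [_ hu']; rewrite len_wone in hu hu'.
  by rewrite (size0nil hu) (size0nil hu'); exact: cq_refl.
by rewrite (perm_big _ pe) big_seq1.
Qed.

End Words.

Section SignCharacter.
Variable C : coxsys.
Local Notation S := (cS C).
Implicit Types (x w : cW C) (s : S) (h : hecke C).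

Definition phi h : K := \sum_(p <- h) sgn p.1 * p.2.

Lemma phi_cons p h : phi (p :: h) = sgn p.1 * p.2 + phi h.
Proof. by rewrite /phi big_cons. Qed.

Lemma phi_nil : phi [::] = 0.
Proof. by rewrite /phi big_nil. Qed.

Lemma phi_cat h1 h2 : phi (h1 ++ h2) = phi h1 + phi h2.
Proof. by rewrite /phi big_cat. Qed.

Lemma phi_flatten (T : Type) (f : T -> hecke C) (r : seq T) :
  phi (flatten [seq f y | y <- r]) = \sum_(y <- r) phi (f y).
Proof.
elim: r => [|y r IH]; first by rewrite big_nil phi_nil.
by rewrite /= phi_cat IH big_cons.
Qed.

Lemma phi_hscale a h : phi (hscale a h) = a * phi h.
Proof.
elim: h => [|p h IH]; first by rewrite /= phi_nil mulr0.
by rewrite /= !phi_cons IH /=; ring.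
Qed.

Lemma phi_hT w : phi (hT w) = sgn w.
Proof. by rewrite /hT phi_cons phi_nil addr0 mulr1. Qed.

(* T_s acts as -1: both T_{ws} and q T_{ws} + (q - 1) T_w have sign -eps_w. *)
Lemma phi_rmulS h s : phi (rmulS h s) = - phi h.
Proof.
elim: h => [|p h IH]; first by rewrite /= phi_nil oppr0.
rewrite /rmulS /= phi_cat -/(rmulS h s) IH phi_cons.
case: ifP => _; rewrite ?phi_cons phi_nil /= sgn_wmulS; ring.
Qed.

Lemma phi_rmulW h w : phi (rmulW h w) = sgn w * phi h.
Proof.
rewrite /rmulW sgnE; elim: (rword w) h => [|s u IH] h /=.
  by rewrite mul1r.
by rewrite IH phi_rmulS exprS; ring.
Qed.

Lemma phi_hmul h h' : phi (hmul h h') = phi h * phi h'.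
Proof.
elim: h' => [|p h' IH]; first by rewrite /= phi_nil mulr0.
rewrite /hmul /= phi_cat -/(hmul h h') IH phi_hscale phi_rmulW phi_cons; ring.
Qed.

Lemma phi_coef h (r : seq (cW C)) : uniq r -> {subset map fst h <= r} ->
  phi h = \sum_(y <- r) sgn y * coef h y.
Proof.
move=> ur; elim: h => [|p h IH] sub.
  by rewrite phi_nil big1 // => y _; rewrite /coef big_nil mulr0.
rewrite phi_cons IH; last by move=> y yh; apply: sub; rewrite /= in_cons yh orbT.
rewrite /coef.
under [RHS]eq_bigr => y _ do rewrite big_cons mulrDr.
rewrite big_split /=; congr (_ + _).
rewrite -(big_pick_eq (fun y => sgn y * p.2) ur); last first.
  by apply: sub; rewrite /= in_cons eqxx.
by apply: eq_bigr => y _; case: eqP => [<-|]; rewrite ?mulr0.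
Qed.

Lemma phi_heq h h' : heq h h' -> phi h = phi h'.
Proof.
move=> e; set r := undup (map fst (h ++ h')).
have ur : uniq r by apply: undup_uniq.
rewrite (phi_coef (r := r)) // ?(phi_coef (h := h') (r := r)) //.
- by apply: eq_bigr => y _; rewrite e.
- by move=> y yh; rewrite mem_undup map_cat mem_cat yh orbT.
- by move=> y yh; rewrite mem_undup map_cat mem_cat yh.
Qed.

End SignCharacter.

Section Dihedral.
Variable C : coxsys.
Local Notation S := (cS C).
Local Notation m := (@cm C).

Fixpoint alt (a b : S) k := if k is k'.+1 then a :: alt b a k' else [::].

Lemma size_alt a b k : size (alt a b k) = k.
Proof. by elim: k a b => //= k IH a b; rewrite IH. Qed.

Lemma alt_double a b j : alt a b j.*2 = flatten (nseq j [:: a; b]).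
Proof. by elim: j => //= j IH; rewrite IH. Qed.

Lemma alt_add a b i j :
  alt a b (i + j) = alt a b i ++ (if odd i then alt b a j else alt a b j).
Proof.
elim: i a b => //= i IH a b; rewrite IH; by case: (odd i).
Qed.

Lemma alt_rcons a b k : alt a b k.+1 = rcons (alt a b k) (if odd k then b else a).
Proof. by rewrite -addn1 alt_add -cats1; case: (odd k). Qed.

Lemma alt_rev a b k : rev (alt a b k) = if odd k then alt a b k else alt b a k.
Proof.
elim: k a b => [//|k IH] a b.
rewrite [alt a b k.+1]/= rev_cons IH [odd k.+1]/=.
case: (boolP (odd k)) => ok /=.
- by rewrite -[b :: _]/(alt b a k.+1) alt_rcons ok.
- by rewrite -[a :: _]/(alt a b k.+1) alt_rcons (negbTE ok).
Qed.

Lemma cox_xx (x : S) a b : cox_eq m (a ++ [:: x; x] ++ b) (a ++ b).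
Proof. by have := ce_rel a b (m := m) (s := x) (t := x); rewrite cm_diag; apply. Qed.

Lemma rev_cancel (u : seq S) : cox_eq m (u ++ rev u) [::].
Proof.
elim: u => [|x u IH]; first exact: ce_refl.
rewrite rev_cons -cats1 /=.
apply: ce_trans (cox_xx x [::] [::]).
have := cox_eq_ctx [:: x] [:: x] IH; by rewrite /= catA cats1.
Qed.

Lemma alt_over a b : (0 < m a b)%N ->
  cox_eq m (alt a b (m a b).+1)
    (rev (if odd (m a b).+1 then alt b a (m a b).-1 else alt a b (m a b).-1)).
Proof.
move=> hm; set n := m a b; set c := (if _ then _ else _).
have e1 : alt a b n.+1 ++ c = alt a b n.*2.
  have -> : n.*2 = (n.+1 + n.-1)%N by rewrite -addnn addSnnS prednK.
  by rewrite alt_add.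
have e2 : cox_eq m (alt a b n.*2) [::].
  by rewrite alt_double; have := ce_rel [::] [::] hm; rewrite /= cats0.
apply: ce_trans (_ : cox_eq m (alt a b n.+1 ++ c ++ rev c) _).
  apply: ce_sym; have := cox_eq_ctx (alt a b n.+1) [::] (rev_cancel c).
  by rewrite !cats0.
have := cox_eq_ctx [::] (rev c) e2; rewrite /= -e1 catA; exact.
Qed.

Variables s t : S.
Hypothesis mst_fin : (0 < m s t)%N.

Definition okp a b := ((a == s) && (b == t)) || ((a == t) && (b == s)).

Lemma okp_sym a b : okp a b -> okp b a.
Proof. by rewrite /okp => /orP [] /andP [-> ->]; rewrite ?orbT. Qed.

Lemma okp_m a b : okp a b -> m a b = m s t.
Proof. by case/orP => /andP [/eqP -> /eqP ->] //; rewrite cm_sym. Qed.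

Lemma dih_word (u : seq S) : all (fun r => (r == s) || (r == t)) u ->
  exists a b k, [/\ okp a b, (k <= m s t)%N & cox_eq m u (alt a b k)].
Proof.
elim: u => [|x u IH] /=.
  move=> _; exists s, t, 0%N; split => //; [by rewrite /okp !eqxx | exact: ce_refl].
case/andP => hx /IH [a [b [k [hab hk he]]]].
have hxab : (x == a) || (x == b).
  by move: hab hx; rewrite /okp; case/orP => /andP [/eqP -> /eqP ->] //; rewrite orbC.
case: k hk he => [|k] hk he.
- case/orP: hx => /eqP ->.
  + exists s, t, 1%N; split => //; first by rewrite /okp !eqxx.
    exact: (cox_cons s he).
  + exists t, s, 1%N; split => //; first by rewrite /okp !eqxx orbT.
    exact: (cox_cons t he).
- case: (boolP (x == a)) => [/eqP -> | nxa].
    exists b, a, k; split; [exact: okp_sym | exact: ltnW |].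
    apply: ce_trans (cox_cons a he) _ => /=.
    by have := cox_xx a [::] (alt b a k).
  rewrite (negbTE nxa) /= in hxab; move/eqP: hxab => ->.
  have hb : cox_eq m (b :: u) (alt b a k.+2) by apply: (cox_cons b he).
  case: (ltnP k.+1 (m s t)) => hk2.
    by exists b, a, k.+2; split => //; exact: okp_sym.
  have ek : k.+1 = m b a.
    by rewrite (okp_m (okp_sym hab)); apply/eqP; rewrite eqn_leq hk hk2.
  have hm : (0 < m b a)%N by rewrite -ek.
  have := alt_over hm; rewrite -ek /= => ho.
  move: (ce_trans hb ho); case: ifP => _; rewrite alt_rev; case: ifP => _ he2.
  all: by [exists a, b, k; split=> //; exact: ltnW |
           exists b, a, k; split => //; [exact: okp_sym | exact: ltnW]].
Qed.

Lemma dih_len (u : seq S) : all (fun r => (r == s) || (r == t)) u ->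
  (len (wprod u) <= m s t)%N.
Proof.
case/dih_word => a [b [k [_ hk he]]].
have -> : wprod u = wprod (alt a b k) by apply/wprod_ker.
by apply: leq_trans (len_le _) _; rewrite size_alt.
Qed.

Lemma dih_closed (w : cW C) : w \in dihedral s t -> wmulS w s \in dihedral s t.
Proof.
rewrite /dihedral !mem_filter => /andP [/pboolP [u [hu hw]] _].
have e : wmulS w s = wprod (rcons u s).
  rewrite /wmulS -!cats1; apply: (@wprod_ctx _ _ _ [::]); by rewrite (proj1 (rwordP w)).
have hu' : all (fun r => (r == s) || (r == t)) (rcons u s) by rewrite all_rcons eqxx hu.
apply/andP; split.
  by apply/pboolP; exists (rcons u s).
by rewrite e; apply: mem_ball; apply: dih_len.
Qed.

Lemma phi_Jgen : phi (Jgen s t) = 0.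
Proof.
rewrite /phi /Jgen big_map /=.
set D := dihedral s t; set Sg := \sum_(i <- D) _.
have uD : uniq D by rewrite /D /dihedral filter_uniq // undup_uniq.
have inj_s : injective (fun w : cW C => wmulS w s).
  by move=> y z e; rewrite -(wmulSK y s) e wmulSK.
have pe : perm_eq (map (fun w : cW C => wmulS w s) D) D.
  apply: uniq_perm; rewrite ?map_inj_uniq //.
  move=> y; apply/mapP/idP => [[z zD ->]|yD]; first exact: dih_closed.
  by exists (wmulS y s); [exact: dih_closed | rewrite wmulSK].
have Sg_opp : Sg = - Sg.
  rewrite {1}/Sg -(perm_big _ pe) big_map /Sg -sumrN.
  by apply: eq_bigr => y _; rewrite sgn_wmulS mulNr.
have two_neq0 : (2%:R : K) != 0.
  by rewrite -(rmorph_nat (@tofrac _)) tofrac_eq0 -polyCMn polyC_eq0.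
move/eqP: Sg_opp; rewrite -subr_eq0 opprK -mulr2n -mulr_natl mulf_eq0.
by rewrite (negbTE two_neq0) => /eqP.
Qed.

End Dihedral.

Lemma phi_inJ (C : coxsys) (h : hecke C) : inJ h -> phi h = 0.
Proof.
elim=> {h}.
- exact: phi_nil.
- by move=> s t hst; apply: phi_Jgen; apply: leq_trans hst.
- by move=> h1 h2 _ e1 _ e2; rewrite phi_cat e1 e2 addr0.
- by move=> x h _ _ e; rewrite phi_hmul e mulr0.
- by move=> x h _ _ e; rewrite phi_hmul e mul0r.
- by move=> h h' _ e he; rewrite -(phi_heq he).
Qed.

Lemma poly_split_degrees (R : nzRingType) (p : {poly R}) n :
  (size p <= n)%N -> (forall k, (k < n)%N -> p`_k = 0) -> p = 0.
Proof.
move=> hs hlow; apply/polyP => k; rewrite coef0.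
by case: (ltnP k n) => hk; [exact: hlow | apply: nth_default; exact: leq_trans hk].
Qed.

Lemma v_neq0 : v != 0.
Proof. by rewrite /v tofrac_eq0 polyX_eq0. Qed.

Section KLSign.
Variable C : coxsys.
Variable iT : cW C -> hecke C.
Variable P : cW C -> cW C -> {poly int}.
Hypothesis hiT : is_iotaT iT.
Hypothesis hKL : is_KL iT P.

Lemma phi_iT x : phi (iT x) = sgn x.
Proof.
have := phi_heq (proj1 (hiT x)); rewrite phi_hmul !phi_hT sgn_winv sgn_wone => e.
by rewrite -[phi _]mul1r -(sgn_sq x) -mulrA e mulr1.
Qed.

Lemma KL_degree_bound w x i : w != wone C -> x \in lower w ->
  (i < size (P x w))%N -> (i.*2 < len w)%N.
Proof.
move=> nw; rewrite /lower mem_filter => /andP [/pboolP hb _] hi.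
have hl : (0 < len w)%N.
  by rewrite lt0n; apply/eqP => /len0_wone e; rewrite e eqxx in nw.
have [_ Pww hdeg] := hKL w.
case: (eqVneq x w) => [exw | nxw].
  by move: hi; rewrite exw Pww size_poly1 ltnS leqn0 => /eqP ->.
have := hdeg x hb (elimN eqP nxw); lia.
Qed.

Definition signed_KL (w : cW C) (deg : nat -> nat) : {poly int} :=
  \sum_(x <- lower w) \sum_(i < size (P x w))
     ((-1) ^+ len x * (P x w)`_i)%:P * 'X^(deg i).

Lemma tofrac_signed_KL w deg : tofrac (signed_KL w deg) =
  \sum_(x <- lower w) \sum_(i < size (P x w))
     ((-1) ^+ len x * (P x w)`_i)%:~R * v ^+ (deg i).
Proof.
rewrite rmorph_sum; apply: eq_bigr => x _; rewrite rmorph_sum.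
apply: eq_bigr => i _; rewrite rmorphM rmorphXn; congr (_ * _).
set c := _ * _; have -> : c%:P = (c%:~R : {poly int}) by rewrite -{1}[c]intz rmorph_int.
by rewrite rmorph_int.
Qed.

Lemma coef_signed_KL w deg k :
  (forall x i, x \in lower w -> (i < size (P x w))%N -> deg i != k) ->
  (signed_KL w deg)`_k = 0.
Proof.
move=> hk; rewrite coef_sum big_seq big1 // => x hx.
rewrite coef_sum big1 // => i _; rewrite coefCM coefXn.
by rewrite eq_sym (negbTE (hk x i hx (ltn_ord i))) mulr0.
Qed.

Lemma phi_Cp w : v ^+ len w * phi (Cp P w) = tofrac (signed_KL w double).
Proof.
rewrite tofrac_signed_KL /phi /Cp big_map mulr_sumr; apply: eq_bigr => x _ /=.
rewrite mulrCA [v ^+ len w * _]mulrA mulfV ?expf_neq0 ?v_neq0 // mul1r.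
rewrite /sgn /evalK mulr_sumr; apply: eq_bigr => i _.
rewrite intrM intr_sign /q -mul2n exprM; ring.
Qed.

Lemma phi_iotaCp w : w != wone C ->
  v ^+ len w * phi (iotaCp iT P w) =
  tofrac (signed_KL w (fun i => (len w).*2 - i.*2)%N).
Proof.
move=> nw; rewrite tofrac_signed_KL /iotaCp phi_flatten mulr_sumr big_seq [RHS]big_seq.
apply: eq_bigr => x hx; rewrite phi_hscale phi_iT /evalK mulr_sumr mulr_suml mulr_sumr.
apply: eq_bigr => i _; rewrite intrM intr_sign.
have hi := KL_degree_bound nw hx (ltn_ord i).
rewrite (exprB (_ : i.*2 <= (len w).*2)%N) ?unitfE ?v_neq0 //; last by lia.
rewrite /q exprVn -exprM mul2n -addnn exprD /sgn -addnn exprD; ring.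
Qed.

(* Step 4: phi(C'_w) = 0 for w <> e, by comparing the exponents of v in C'_w
   and in iota(C'_w) = C'_w. *)
Lemma phi_Cp0 w : w != wone C -> phi (Cp P w) = 0.
Proof.
move=> nw; have [hinv _ _] := hKL w.
have same : signed_KL w double = signed_KL w (fun i => (len w).*2 - i.*2)%N.
  by apply/eqP; rewrite -tofrac_eq -phi_Cp -phi_iotaCp // (phi_heq hinv).
have zero : signed_KL w double = 0.
  apply: (poly_split_degrees (n := len w)).
    apply/leq_sizeP => k hk; apply: coef_signed_KL => x i hx hi.
    by move: (KL_degree_bound nw hx hi) hk; lia.
  move=> k hk; rewrite same; apply: coef_signed_KL => x i hx hi.
  by move: (KL_degree_bound nw hx hi) hk; lia.
have := phi_Cp w; rewrite zero rmorph0 => /eqP; rewrite mulf_eq0 expf_eq0.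
by rewrite (negbTE v_neq0) andbF => /eqP.
Qed.

End KLSign.

Lemma phi_cw (C : coxsys) (L : cW C -> cW C -> {poly int}) (w : cW C) :
  phi (cw L w) = \sum_(x <- lowerc w) sgn x * v ^- len x * evalK (L x w) v^-1.
Proof. by rewrite /phi /cw big_map; apply: eq_bigr => x _; rewrite mulrA. Qed.

Lemma phi_cw_Cp (C : coxsys) (P L : cW C -> cW C -> {poly int}) (w : cW C) :
  condP P L -> fc w -> phi (cw L w) = phi (Cp P w).
Proof.
move=> hP fw; have := phi_inJ ((hP w).1 fw).
by rewrite phi_cat phi_hscale mulN1r => /eqP; rewrite subr_eq0 => /eqP.
Qed.

Theorem mainTheorem19 (C : coxsys) (iT : cW C -> hecke C)
    (P a L : cW C -> cW C -> {poly int}) :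
  is_iotaT iT -> is_KL iT P -> is_aTL iT a -> is_L a L -> condP P L ->
  forall w : cW C, fc w ->
    \sum_(x <- lowerc w) sgn x * v ^- len x * evalK (L x w) v^-1
      = (w == wone C)%:R.
Proof.
move=> hiT hKL _ hL hP w fw.
case: (eqVneq w (wone C)) => [ew | nw].
  have [Lee _ _ _] := hL w fw.
  rewrite ew sum_lowerc_wone -ew Lee ew sgn_wone len_wone expr0 invr1 !mul1r.
  by rewrite /evalK size_poly1 big_ord1 coefC /= mulr1.
by rewrite -phi_cw (phi_cw_Cp hP fw) (phi_Cp0 hiT hKL nw).
Qed.
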